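(* Let $p$ be a prime and let $a,b,c$ be positive integers with $b>1$, $c\mid p^a-1$, $c$ a primitive divisor of $p^a-1$, and $p-1\mid c$. Put $m=ab$, $n=bc$, $u=\frac{p^a-1}{c}$, assume $n$ is a primitive divisor of $p^m-1$, and put $k=\frac{p^m-1}{n}$. Then for each $\beta\in\mathbb{F}_{p^m}$ there exist $\alpha_1,\dots,\alpha_b\in\mathbb{F}_{p^a}$ such that $$\#C_{k,\beta}(\mathbb{F}_{p^m})=\tfrac1b\Psi_b(p^a)\sum_{i=1}^b\#C_{u,\alpha_i}(\mathbb{F}_{p^a})-(p+1)p^a\Psi_{b-1}(p^a).\qquad(\ast)$$ Conversely, for any $\alpha_1,\dots,\alpha_b\in\mathbb{F}_{p^a}$ there exists $\beta\in\mathbb{F}_{p^m}$ satisfying $(\ast)$.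
   Context: $\Psi_b(x)=x^{b-1}+\cdots+x+1$. For a prime power $Q=p^M$, an integer $k$ and $\beta\in\mathbb{F}_Q$, $C_{k,\beta}$ is the Artin–Schreier curve $y^p-y=\beta x^k$, and $\#C_{k,\beta}(\mathbb{F}_Q):=1+\#\{(x,y)\in\mathbb{F}_Q^2: y^p-y=\beta x^k\}$. A positive integer $d$ is a primitive divisor of $p^M-1$ if $d\mid p^M-1$ and $d\nmid p^t-1$ for all $1\le t<M$. *)

From HB Require Import structures.
From mathcomp Require Import all_boot all_order all_algebra all_field.
Set Implicit Arguments. Unset Strict Implicit. Unset Printing Implicit Defensive.
Import GRing.Theory.

Definition Psi (b x : nat) : nat := \sum_(i < b) x ^ i.

Definition primitive_divisor (d p M : nat) : Prop :=
  (d %| p ^ M - 1)%N /\ (forall t : nat, (1 <= t)%N -> (t < M)%N -> ~~ (d %| p ^ t - 1)%N).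

(* #C_{k,beta}(F) = 1 + #{(x,y) in F^2 : y^p - y = beta x^k}, where p is the
   characteristic of F passed explicitly. *)
Definition nbC (F : finFieldType) (p k : nat) (beta : F) : nat :=
  (1 + #|[set xy : F * F | (xy.2 ^+ p - xy.2 == beta * xy.1 ^+ k)%R]|)%N.

(* Counting fibrewise over x, the equation y^p - y = t has p solutions when t
   lies in the image W of the Artin-Schreier map y |-> y^p - y and none
   otherwise; hence if #F = kn + 1 then #C_{k,beta}(F) = 1 + p + kp #{z : z^n = 1,
   beta z \in W}.  Embed F_Q (Q = p^a) in F_{Q^b} and let tau be the relative
   trace read back in F_Q: tau is onto, F_Q-linear and commutes with the
   Artin-Schreier map, and comparing cardinalities gives y \in W <-> tau y \in W.
   Writing the n-th roots of unity (n = bc) as zeta^(bt + s) with s < b, the count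
   over F_{Q^b} splits into b counts over F_Q for alpha_s = tau (beta zeta^s).
   Because n is a primitive divisor, the conjugates zeta^(Q^i), i < b, are
   distinct, so 1, zeta, ..., zeta^(b-1) is an F_Q-basis of F_{Q^b} and
   beta |-> (tau (beta zeta^s))_s is a bijection, which gives the converse. *)

From HB Require Import structures.
From mathcomp Require Import all_boot all_order all_algebra all_field.
From mathcomp Require Import cyclic zify ring.
Import GRing.Theory.
Local Open Scope ring_scope.

(** * Fibres of additive maps and the Artin-Schreier map *)

Section AdditiveFibres.
Context {A B : finZmodType} (f : {additive A -> B}).

Lemma card_additive_fibre t : #|[set x | f x == t]| =
  if t \in [set f x | x : A] then #|[set x | f x == 0]| else 0%N.
Proof.
case: imsetP => [[x0 _ ->]|not_im].
  have -> : [set x | f x == f x0] = [set y + x0 | y in [set y | f y == 0]].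
    apply/setP => x; rewrite inE; apply/eqP/imsetP => [fx|[y]].
      by exists (x - x0); rewrite ?subrK // inE raddfB fx subrr.
    by rewrite inE => /eqP fy ->; rewrite raddfD fy add0r.
  by rewrite card_imset //; apply: addIr.
apply/eqP; rewrite cards_eq0; apply/eqP/setP => x; rewrite !inE.
by apply/negbTE/eqP => fx; apply: not_im; exists x.
Qed.

Lemma card_additive_preim (P : pred B) : #|[set x | P (f x)]| =
  (#|[set x | f x == 0%R]| * #|[set t | P t && (t \in [set f x | x : A])]|)%N.
Proof.
rewrite -sum1_card (partition_big f P) //=.
rewrite (eq_bigr (fun t => #|[set x | f x == t]|)); last first.
  move=> t Pt; rewrite -sum1_card; apply: eq_bigl => x.
  by rewrite !inE; case: eqP => [->|]; rewrite ?Pt ?andbF.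
rewrite (eq_bigr _ (fun t _ => card_additive_fibre t)) -big_mkcondr /=.
rewrite sum_nat_const mulnC; congr (_ * _)%N.
  by apply: eq_card => t; rewrite inE.
by move=> t; rewrite inE.
Qed.

Lemma card_additive_ker_im : #|A| = (#|[set x | f x == 0%R]| * #|[set f x | x : A]|)%N.
Proof.
rewrite -cardsT (_ : setT = [set x | predT (f x)]); last by apply/setP => x; rewrite !inE.
by rewrite card_additive_preim; congr (_ * _)%N; apply: eq_card => t; rewrite !inE.
Qed.

End AdditiveFibres.

Lemma pnat_pchar_expn {R : nzRingType} {p} e : p \in [pchar R] -> [pchar R].-nat (p ^ e)%N.
Proof. by move=> pR; rewrite (eq_pnat _ (pcharf_eq pR)) pnatX pnat_id ?(pcharf_prime pR). Qed.

Lemma card_roots_lt_size {F : finFieldType} (P : {poly F}) : P != 0 ->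
  (#|[set y | root P y]| < size P)%N.
Proof.
move=> P0; rewrite cardE; apply: max_poly_roots P0 _ _ => [|]; last exact: enum_uniq.
by apply/allP => y; rewrite mem_enum inE.
Qed.

Lemma card_fixed_expr_le (F : finFieldType) N : (1 < N)%N ->
  (#|[set y : F | y ^+ N == y]| <= N)%N.
Proof.
move=> N_gt1; have szP : size ('X^N - 'X : {poly F}) = N.+1.
  by rewrite size_polyDl ?size_polyXn // size_polyN size_polyX.
have P0 : ('X^N - 'X : {poly F}) != 0 by rewrite -size_poly_eq0 szP.
rewrite -ltnS -szP (leq_ltn_trans _ (card_roots_lt_size _ P0)) //.
by apply: subset_leq_card; apply/subsetP => y; rewrite !inE rootE !hornerE subr_eq0.
Qed.

Section ArtinSchreier.
Variables (F : finFieldType) (p : nat).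
Hypothesis pF : p \in [pchar F].

Definition artin_schreier (y : F) := y ^+ p - y.

Lemma artin_schreier_is_zmod_morphism : zmod_morphism artin_schreier.
Proof.
move=> x y; have pnat_p : [pchar F].-nat p by rewrite -(expn1 p) pnat_pchar_expn.
by rewrite /artin_schreier exprDn_pchar // exprNn_pchar //; ring.
Qed.

HB.instance Definition _ := GRing.isZmodMorphism.Build F F artin_schreier
  artin_schreier_is_zmod_morphism.

Lemma card_artin_schreier_ker : #|[set y | artin_schreier y == 0]| = p.
Proof.
have p_gt1 := prime_gt1 (pcharf_prime pF).
apply/eqP; rewrite eqn_leq; apply/andP; split.
  apply: leq_trans _ (@card_fixed_expr_le F p p_gt1); apply: subset_leq_card.
  by apply/subsetP => y; rewrite !inE subr_eq0.
have card_prime_field : #|[set (i : nat)%:R | i : 'I_p] : {set F}| = p.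
  rewrite card_imset ?card_ord // => i j eq_ij; apply: val_inj => /=.
  wlog le_ij : i j eq_ij / (i <= j)%N.
    move=> wlog_ij; case: (leqP i j) => [|/ltnW] le; first exact: wlog_ij.
    exact/esym/wlog_ij.
  have : (p %| j - i)%N by rewrite (dvdn_pcharf pF) natrB // eq_ij subrr.
  by rewrite /dvdn modn_small => [/eqP|]; have := ltn_ord j; lia.
rewrite -[X in (X <= _)%N]card_prime_field.
apply/subset_leq_card/subsetP => _ /imsetP[i _ ->].
by rewrite inE /artin_schreier -(pFrobenius_autE pF) pFrobenius_aut_nat subrr.
Qed.

Definition artin_schreier_image := [set artin_schreier y | y : F].

Lemma card_artin_schreier_fibre t : #|[set y | artin_schreier y == t]| =
  if t \in artin_schreier_image then p else 0%N.
Proof. by rewrite card_additive_fibre card_artin_schreier_ker. Qed.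

Lemma card_artin_schreier_image : #|F| = (p * #|artin_schreier_image|)%N.
Proof. by rewrite (card_additive_ker_im artin_schreier) card_artin_schreier_ker. Qed.

Lemma artin_schreier_image0 : 0 \in artin_schreier_image.
Proof. by rewrite -(raddf0 artin_schreier) imset_f. Qed.

End ArtinSchreier.

Arguments artin_schreier {F} p y.

(** * Point counts via roots of unity *)

Lemma sum_expr_periodic {R : nzRingType} {z : R} {n} k (G : R -> nat) : z ^+ n = 1 ->
  (\sum_(i < k * n) G (z ^+ i) = k * \sum_(j < n) G (z ^+ j))%N.
Proof.
move=> zn1; elim: k => [|k IHk]; first by rewrite mul0n big_ord0.
rewrite mulSn big_split_ord /= mulSn -IHk; congr (_ + _)%N.
by apply: eq_bigr => i _; rewrite exprD zn1 mul1r.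
Qed.

Lemma prim_root_expr_inj {R : nzRingType} {n} {z : R} : n.-primitive_root z ->
  injective (fun i : 'I_n => z ^+ i).
Proof.
by move=> z_prim i j /eqP; rewrite (eq_prim_root_expr z_prim) !modn_small // => /eqP/val_inj.
Qed.

Section FiniteFieldUnits.
Variable F : finFieldType.

Lemma finField_prim_root_exists : exists w : F, (#|F|.-1).-primitive_root w.
Proof.
have F_gt1 : (1 < #|F|)%N := finNzRing_gt1 F.
have : has (#|F|.-1).-primitive_root (enum [set x : F | x != 0]).
  apply: has_prim_root; [lia | | exact: enum_uniq | ].
    apply/allP => x; rewrite mem_enum inE => x0; rewrite unity_rootE.
    by apply/eqP/(mulIf x0); rewrite mul1r -exprSr prednK ?expf_card //; lia.
  by rewrite -cardE (_ : [set x | x != 0] = [set~ 0]) ?cardsC1 //; apply/setP=> x; rewrite !inE.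
by case/hasP => w _ w_prim; exists w.
Qed.

Lemma finField_sum_prim_root (w : F) (G : F -> nat) : (#|F|.-1).-primitive_root w ->
  (\sum_(x : F) G x = G 0%R + \sum_(i < #|F|.-1) G (w ^+ i))%N.
Proof.
move=> w_prim; have F_gt1 : (1 < #|F|)%N := finNzRing_gt1 F.
rewrite (bigD1 0) //=; congr (_ + _)%N.
rewrite -(big_imset _ (in2W (prim_root_expr_inj w_prim))) /=.
apply: eq_bigl => x; apply/idP/imsetP => [x0|[i _ ->]].
  have [|i ->] := prim_rootP w_prim (x := x); last by exists i.
  by apply: (mulIf x0); rewrite mul1r -exprSr prednK ?expf_card //; lia.
by rewrite expf_neq0 // (prim_root_eq0 w_prim) -lt0n; lia.
Qed.

Lemma card_unity_roots_pred n (z : F) (P : pred F) : n.-primitive_root z ->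
  #|[set x | (x ^+ n == 1) && P x]| = (\sum_(j < n) P (z ^+ j))%N.
Proof.
move=> z_prim; have z_inj := prim_root_expr_inj z_prim.
have -> : (\sum_(j < n) P (z ^+ j))%N = #|[set j : 'I_n | P (z ^+ j)]|.
  by rewrite -sum1_card [RHS]big_mkcond /=; apply: eq_bigr => j _; rewrite inE; case: (P _).
rewrite -(card_imset _ z_inj); apply: eq_card => x; rewrite inE.
apply/andP/imsetP => [[/eqP xn1 Px] | [j]].
  by have [j xj] := prim_rootP z_prim xn1; exists j; rewrite // inE -xj.
by rewrite inE => Pj ->; rewrite exprAC (prim_expr_order z_prim) expr1n.
Qed.

End FiniteFieldUnits.

Arguments finField_sum_prim_root {F w} G.
Arguments card_unity_roots_pred {F n z} P.

Section PointCount.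
Variables (F : finFieldType) (p : nat).
Hypothesis pF : p \in [pchar F].

Definition as_unity_roots n (beta : F) :=
  [set z : F | (z ^+ n == 1) && (beta * z \in artin_schreier_image F p)].

Lemma nbC_unity_roots k n (beta : F) : #|F| = (k * n).+1 ->
  nbC p k beta = (1 + p + k * p * #|as_unity_roots n beta|)%N.
Proof.
move=> cardF; rewrite /nbC -addnA; congr (1 + _)%N.
have -> : #|[set xy : F * F | xy.2 ^+ p - xy.2 == beta * xy.1 ^+ k]| =
    (\sum_(x : F) #|[set y | artin_schreier p y == (beta * x ^+ k)%R]|)%N.
  rewrite -sum1_card; under [RHS]eq_bigr do rewrite -sum1_card.
  by rewrite pair_big_dep /=; apply: eq_bigl => -[x y]; rewrite !inE.
have [w w_prim] := finField_prim_root_exists F.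
under eq_bigr do rewrite card_artin_schreier_fibre //.
have [k_gt0 n_gt0] : (0 < k)%N /\ (0 < n)%N.
  by move: (finNzRing_gt1 F); rewrite cardF ltnS muln_gt0 => /andP.
rewrite (finField_sum_prim_root _ w_prim) expr0n eqn0Ngt k_gt0 mulr0.
rewrite artin_schreier_image0 //; congr (_ + _)%N.
rewrite cardF /= in w_prim *.
have z_prim : n.-primitive_root (w ^+ k).
  by have := dvdn_prim_root w_prim (dvdn_mull k (dvdnn n)); rewrite mulnK.
under eq_bigr do rewrite exprAC.
rewrite (sum_expr_periodic _ (fun y => if beta * y \in _ then p else 0%N)); last first.
  exact: prim_expr_order z_prim.
rewrite /as_unity_roots (card_unity_roots_pred (fun y => beta * y \in _) z_prim).
rewrite -mulnA; congr (_ * _)%N; rewrite big_distrr; apply: eq_bigr => i _.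
by case: (_ \in _); rewrite /= ?muln0 ?muln1.
Qed.

End PointCount.

Arguments nbC_unity_roots {F p} pF k n beta.

(** * Embedding F_Q in F_{Q^b} *)

Section FinFieldEmbedding.
Context {p : nat} {A M : finFieldType} {iA : {rmorphism 'F_p -> A}}.
Variables (iM : {rmorphism 'F_p -> M}) (g : A).
Context {f0 : {poly 'F_p}}.
Hypothesis g_prim : (#|A|.-1).-primitive_root g.
Hypothesis f0_dvdp : forall h, root (map_poly iA h) g = (f0 %| h).
Hypothesis f0_neq0 : f0 != 0.
Hypothesis A_in_M : forall x : A, x ^+ #|M| = x.

Lemma exists_root_map_poly : exists r : M, root (map_poly iM f0) r.
Proof.
have : f0 %| 'X^#|M| - 'X.
  by rewrite -f0_dvdp rmorphB /= map_polyXn map_polyX rootE !hornerE A_in_M subrr.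
rewrite -(dvdp_map iM) rmorphB /= map_polyXn map_polyX finField_genPoly.
case/dvdp_prod_XsubC => m f0_eqp.
have : (1 < size (map_poly iM f0))%N.
  rewrite size_map_poly -(size_map_poly iA).
  by apply: (root_size_gt1 (a := g)); rewrite ?map_poly_eq0 ?f0_dvdp.
rewrite (eqp_size f0_eqp) size_prod_XsubC.
case E : (mask m (index_enum M)) => [|x s] // _.
by exists x; rewrite (eqp_root f0_eqp) E root_prod_XsubC mem_head.
Qed.

Variable r : M.
Hypothesis r_root : root (map_poly iM f0) r.

Local Notation evA := (horner_morph (fun a => mulrC g (iA a))).
Local Notation evM := (horner_morph (fun a => mulrC r (iM a))).

(* The embedding sends g^i to r^i; going through polynomials makes it additive,
   because h(g) = 0 forces f0 | h and hence h(r) = 0. *)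
Definition dlog_poly (x : A) : {poly 'F_p} :=
  if [pick i : 'I_(#|A|.-1) | g ^+ i == x] is Some i then 'X^i else 0.

Definition embed (x : A) : M := evM (dlog_poly x).

Lemma evA_dlog_poly x : evA (dlog_poly x) = x.
Proof.
rewrite /dlog_poly; case: pickP => [i /eqP <-|no_log].
  by rewrite /horner_morph map_polyXn hornerXn.
have [->|x_neq0] := eqVneq x 0; first by rewrite rmorph0.
have A_gt0 : (0 < #|A|)%N by apply/card_gt0P; exists 0.
have xA : x ^+ #|A|.-1 = 1.
  by apply: (mulIf x_neq0); rewrite mul1r -exprSr prednK // expf_card.
by have [i xi] := prim_rootP g_prim xA; move: (no_log i); rewrite xi eqxx.
Qed.

Lemma embedE h : embed (evA h) = evM h.
Proof.
apply/eqP; rewrite -subr_eq0 -rmorphB.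
have /dvdpP[q ->] : f0 %| dlog_poly (evA h) - h.
  rewrite -f0_dvdp; apply/rootP; change (evA (dlog_poly (evA h) - h) = 0).
  by rewrite rmorphB /= evA_dlog_poly subrr.
by rewrite rmorphM /= /horner_morph (rootP r_root) mulr0.
Qed.

Lemma embed_is_zmod_morphism : zmod_morphism embed.
Proof. by move=> x y; rewrite -[x]evA_dlog_poly -[y]evA_dlog_poly -rmorphB !embedE rmorphB. Qed.

Lemma embed_is_monoid_morphism : monoid_morphism embed.
Proof.
split=> [|x y]; first by rewrite -(rmorph1 evA) embedE rmorph1.
by rewrite -[x]evA_dlog_poly -[y]evA_dlog_poly -rmorphM !embedE rmorphM.
Qed.

HB.instance Definition _ := GRing.isZmodMorphism.Build A M embed embed_is_zmod_morphism.
HB.instance Definition _ := GRing.isMonoidMorphism.Build A M embed embed_is_monoid_morphism.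

Lemma embed_onto y : y ^+ #|A| = y -> exists x, embed x = y.
Proof.
have A_gt1 : (1 < #|A|)%N := finNzRing_gt1 A.
have im_fixed : [set embed x | x : A] = [set y : M | y ^+ #|A| == y].
  apply/eqP; rewrite eqEcard card_imset; last exact: fmorph_inj.
  rewrite card_fixed_expr_le // andbT; apply/subsetP => _ /imsetP[x _ ->].
  by rewrite inE -rmorphXn expf_card.
move=> yA; have : y \in [set embed x | x : A] by rewrite im_fixed inE yA.
by case/imsetP=> x _ ->; exists x.
Qed.

End FinFieldEmbedding.

Lemma finField_embedding {p} {A M : finFieldType} :
  p \in [pchar A] -> p \in [pchar M] -> (forall x : A, x ^+ #|M| = x) ->
  exists phi : A -> M, [/\ zmod_morphism phi, monoid_morphism phi &
    forall y, y ^+ #|A| = y -> exists x, phi x = y].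
Proof.
move=> pA pM A_in_M; pose AA := pPrimeCharType pA; pose MM := pPrimeCharType pM.
have [g g_prim] := finField_prim_root_exists AA.
have /polyOver1P[f0 f0E] := minPolyOver 1 g.
have f0_root : root (map_poly (in_alg AA) f0) g by rewrite -f0E root_minPoly.
have f0_dvdp h : root (map_poly (in_alg AA) h) g = (f0 %| h).
  apply/idP/idP => [root_h|/dvdpP[q ->]].
    rewrite -(dvdp_map (in_alg AA)) -f0E minPoly_dvdp //; apply/polyOver1P; by exists h.
  by rewrite rmorphM rootM f0_root orbT.
have f0_neq0 : f0 != 0.
  by rewrite -(map_poly_eq0 (in_alg AA)) -f0E monic_neq0 ?monic_minPoly.
have [r r_root] := exists_root_map_poly (M := MM) (in_alg MM) g f0_dvdp f0_neq0 A_in_M.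
exists (embed (M := MM) (in_alg MM) g r); split.
- exact: embed_is_zmod_morphism.
- exact: embed_is_monoid_morphism.
- exact: (embed_onto (M := MM) (in_alg MM) g g_prim f0_dvdp r r_root).
Qed.

(** * The relative trace *)

Lemma exprn_sum_pchar (R : comNzRingType) n (I : Type) (r : seq I) (P : pred I)
    (F : I -> R) : [pchar R].-nat n ->
  (\sum_(i <- r | P i) F i) ^+ n = \sum_(i <- r | P i) F i ^+ n.
Proof.
move=> pn; apply: (big_morph (fun x : R => x ^+ n)) => [x y|]; first exact: exprDn_pchar.
by rewrite expr0n; case/andP: pn => /gtn_eqF->.
Qed.

Lemma sum_ord_mul (m n : nat) (h : nat -> nat) :
  (\sum_(j < m * n) h j = \sum_(t < m) \sum_(s < n) h (t * n + s))%N.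
Proof.
elim: m => [|m IHm]; first by rewrite mul0n !big_ord0.
by rewrite mulSnr big_split_ord IHm big_ord_recr.
Qed.

Lemma expf_card_expn (F : finFieldType) (x : F) i : x ^+ (#|F| ^ i) = x.
Proof. by elim: i => [|i IHi]; rewrite ?expr1 // expnSr exprM IHi expf_card. Qed.

Lemma Psi_succ e Q : Psi e.+1 Q = (1 + Q * Psi e Q)%N.
Proof.
rewrite /Psi big_ord_recl expn0 big_distrr; congr (_ + _)%N.
by apply: eq_bigr => i _; rewrite expnS.
Qed.

Lemma point_count_identity {b Q p k u : nat} {N : 'I_b -> nat} :
  (0 < b)%N -> (Psi b Q * u = b * k)%N ->
  (1 + p + k * p * \sum_(s < b) N s)%N%:Q =
  (Psi b Q)%:Q / b%:Q * (\sum_(s < b) (1 + p + u * p * N s)%N%:Q)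
    - ((p + 1) * Q * Psi b.-1 Q)%N%:Q.
Proof.
move=> b_gt0 Psi_u; set S := (\sum_(s < b) N s)%N.
have sum_terms : (\sum_(s < b) (1 + p + u * p * N s) = b * (1 + p) + u * p * S)%N.
  by rewrite big_split sum_nat_const card_ord big_distrr.
have nat_id : (b * (1 + p + k * p * S) + b * ((p + 1) * Q * Psi b.-1 Q) =
               Psi b Q * (b * (1 + p) + u * p * S))%N.
  have PsiE : Psi b Q = (1 + Q * Psi b.-1 Q)%N by rewrite -{1}(prednK b_gt0) Psi_succ.
  move: Psi_u; rewrite PsiE; move: (Psi b.-1 Q) => X Psi_u.
  have -> : ((1 + Q * X) * (b * (1 + p) + u * p * S) =
             (1 + Q * X) * b * (1 + p) + (1 + Q * X) * u * p * S)%N by ring.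
  by rewrite Psi_u; ring.
have b_neq0 : b%:Q != 0 by rewrite Num.Theory.pnatr_eq0 -lt0n.
apply/eqP; rewrite eq_sym subr_eq; apply/eqP; apply: (mulfI b_neq0).
rewrite mulrA [b%:Q * _]mulrC mulfVK //.
under eq_bigr do rewrite -pmulrn.
by rewrite -!pmulrn -natr_sum sum_terms -natrD -!natrM [in RHS]mulnDr nat_id.
Qed.

Section RelativeTrace.
Context {p a b : nat} {A M : finFieldType}.
Hypotheses (pA : p \in [pchar A]) (pM : p \in [pchar M]).
Local Notation Q := (p ^ a)%N.
Hypotheses (cardA : #|A| = Q) (cardM : #|M| = (Q ^ b)%N) (b_gt0 : (0 < b)%N).

Context {phi : A -> M}.
Hypotheses (phi_zmod : zmod_morphism phi) (phi_monoid : monoid_morphism phi).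
Hypothesis phi_onto : forall y, y ^+ #|A| = y -> exists x, phi x = y.

HB.instance Definition _ := GRing.isZmodMorphism.Build A M phi phi_zmod.
HB.instance Definition _ := GRing.isMonoidMorphism.Build A M phi phi_monoid.

Lemma Q_gt1 : (1 < Q)%N. Proof. by rewrite -cardA finNzRing_gt1. Qed.

Lemma phi_exprQ x i : phi x ^+ (Q ^ i) = phi x.
Proof. by rewrite -rmorphXn -cardA expf_card_expn. Qed.

Definition trace (y : M) := \sum_(i < b) y ^+ (Q ^ i).

Lemma pnat_pchar_Q i : [pchar M].-nat (Q ^ i)%N.
Proof. by rewrite -expnM pnat_pchar_expn. Qed.

Lemma trace_is_zmod_morphism : zmod_morphism trace.
Proof.
move=> x y; rewrite /trace -sumrB; apply: eq_bigr => i _.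
by rewrite exprDn_pchar ?exprNn_pchar ?pnat_pchar_Q.
Qed.

Lemma traceZ x y : trace (phi x * y) = phi x * trace y.
Proof. by rewrite /trace mulr_sumr; apply: eq_bigr => i _; rewrite exprMn phi_exprQ. Qed.

Lemma trace_exprp y : trace (y ^+ p) = trace y ^+ p.
Proof.
have pnat_p : [pchar M].-nat p by rewrite -(expn1 p) pnat_pchar_expn.
by rewrite /trace exprn_sum_pchar //; apply: eq_bigr => i _; rewrite exprAC.
Qed.

Lemma trace_exprQ y : trace y ^+ Q = trace y.
Proof.
rewrite /trace exprn_sum_pchar ?pnat_pchar_expn //.
under eq_bigr do rewrite -exprM -expnSr.
move: cardM; case: b b_gt0 => // b' _ cardM'.
rewrite big_ord_recr big_ord_recl /= -cardM' expf_card expn0 expr1 addrC.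
by congr (_ + _); apply: eq_bigr => i _; rewrite /bump leq0n add1n.
Qed.

Definition embed_inv (y : M) : A := odflt 0 [pick x | phi x == y].

Lemma embed_invK y : y ^+ Q = y -> phi (embed_inv y) = y.
Proof.
rewrite -cardA => /phi_onto[x <-]; rewrite /embed_inv.
by case: pickP => [x' /eqP/fmorph_inj-> //|/(_ x)]; rewrite eqxx.
Qed.

Definition tau (y : M) : A := embed_inv (trace y).

Lemma phi_tau y : phi (tau y) = trace y.
Proof. exact/embed_invK/trace_exprQ. Qed.

Lemma tau_is_zmod_morphism : zmod_morphism tau.
Proof.
by move=> x y; apply: (fmorph_inj phi); rewrite /= rmorphB /= !phi_tau trace_is_zmod_morphism.
Qed.

HB.instance Definition _ := GRing.isZmodMorphism.Build M A tau tau_is_zmod_morphism.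

Lemma tauZ x y : tau (phi x * y) = x * tau y.
Proof. by apply: (fmorph_inj phi); rewrite /= rmorphM /= !phi_tau traceZ. Qed.

Lemma tau_artin_schreier y : tau (artin_schreier p y) = artin_schreier p (tau y).
Proof.
apply: (fmorph_inj phi); rewrite /= phi_tau /artin_schreier rmorphB rmorphXn /= phi_tau.
by rewrite trace_is_zmod_morphism trace_exprp.
Qed.

Lemma card_tau_ker_le : (#|[set y | tau y == 0%R]| <= Q ^ b.-1)%N.
Proof.
pose P : {poly M} := \sum_(i < b) 'X^(Q ^ i).
have Q_gt1 := Q_gt1.
have szP : size P = (Q ^ b.-1).+1.
  rewrite /P -(prednK b_gt0) big_ord_recr /= addrC size_polyDl size_polyXn //.
  rewrite ltnS; apply: leq_trans (size_sum _ _ _) _.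
  by apply/bigmax_leqP => i _; rewrite size_polyXn ltn_exp2l.
have P_neq0 : P != 0 by rewrite -size_poly_eq0 szP.
rewrite -ltnS -szP (leq_ltn_trans _ (card_roots_lt_size _ P_neq0)) //.
apply/subset_leq_card/subsetP => y; rewrite !inE -(fmorph_eq0 phi) /= phi_tau.
by rewrite rootE /P horner_sum; under eq_bigr do rewrite hornerXn.
Qed.

Lemma card_tau_ker_im :
  #|[set y | tau y == 0%R]| = (Q ^ b.-1)%N /\ #|[set tau y | y : M]| = Q.
Proof.
have := card_additive_ker_im tau; rewrite cardM -{1}(prednK b_gt0) expnSr.
have := card_tau_ker_le; have : (#|[set tau y | y : M]| <= Q)%N by rewrite -cardA max_card.
have := Q_gt1; have : (0 < Q ^ b.-1)%N by rewrite expn_gt0 ltnW // Q_gt1.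
move: #|_| #|_| (Q ^ b.-1)%N Q => I K X Q'; nia.
Qed.

Lemma tau_surj : [set tau y | y : M] = setT.
Proof.
have [_ im_Q] := card_tau_ker_im.
by apply/eqP; rewrite eqEcard subsetT cardsT cardA im_Q leqnn.
Qed.

Lemma mem_artin_schreier_image_tau y :
  (y \in artin_schreier_image M p) = (tau y \in artin_schreier_image A p).
Proof.
(* tau maps W_M into W_A, and W_M and the preimage of W_A both have #M / p elements. *)
set S := [set y : M | tau y \in artin_schreier_image A p].
have sub_S : artin_schreier_image M p \subset S.
  apply/subsetP => _ /imsetP[z _ ->]; rewrite inE tau_artin_schreier; exact: imset_f.
have card_S : #|S| = (Q ^ b.-1 * #|artin_schreier_image A p|)%N.
  rewrite /S (card_additive_preim tau (mem (artin_schreier_image A p))) tau_surj.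
  by case: card_tau_ker_im => -> _; congr (_ * _)%N; apply: eq_card => t; rewrite !inE andbT.
suff -> : artin_schreier_image M p = S by rewrite inE.
have p_gt0 : (0 < p)%N := prime_gt0 (pcharf_prime pM).
apply/eqP; rewrite eqEcard sub_S -(leq_pmul2l p_gt0) card_S mulnCA.
rewrite -card_artin_schreier_image // -card_artin_schreier_image // cardA cardM.
by rewrite -(prednK b_gt0) expnSr mulnC leqnn.
Qed.

Section TraceCoordinates.
Context {c : nat} {zeta : M}.
Hypothesis c_dvd : (c %| Q - 1)%N.
Hypothesis bc_prim : primitive_divisor (b * c) p (a * b).
Hypothesis zeta_prim : (b * c).-primitive_root zeta.

Local Notation eta := (zeta ^+ b).

Lemma c_gt0 : (0 < c)%N.
Proof. by have := prim_order_gt0 zeta_prim; rewrite muln_gt0 => /andP[]. Qed.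

Lemma eta_prim : c.-primitive_root eta.
Proof. by have := dvdn_prim_root zeta_prim (dvdn_mull b (dvdnn c)); rewrite mulnK ?c_gt0. Qed.

Lemma eta_exprQ : eta ^+ Q = eta.
Proof.
have /eqP eta1 : eta ^+ (Q - 1) == 1 by rewrite -(prim_order_dvd eta_prim).
by rewrite -[in LHS](subnK (ltnW Q_gt1)) exprD eta1 mul1r expr1.
Qed.

Lemma embed_inv_eta_prim : c.-primitive_root (embed_inv eta).
Proof. by rewrite -(fmorph_primitive_root phi) /= embed_invK ?eta_exprQ ?eta_prim. Qed.

Lemma card_as_unity_roots_split beta :
  #|as_unity_roots M p (b * c) beta| =
  (\sum_(s < b) #|as_unity_roots A p c (tau (beta * zeta ^+ s)%R)|)%N.
Proof.
rewrite /as_unity_roots (card_unity_roots_pred _ zeta_prim) mulnC.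
rewrite (sum_ord_mul _ _ (fun j => nat_of_bool (beta * zeta ^+ j \in _))) exchange_big /=.
apply: eq_bigr => s _; rewrite (card_unity_roots_pred _ embed_inv_eta_prim).
apply: eq_bigr => t _; congr (nat_of_bool _).
rewrite mem_artin_schreier_image_tau exprD mulnC exprM.
have -> : eta ^+ t = phi (embed_inv eta ^+ t) by rewrite rmorphXn /= embed_invK ?eta_exprQ.
by rewrite mulrCA tauZ mulrC.
Qed.

Lemma coprime_bc_Q i : coprime (b * c) (Q ^ i).
Proof.
have [bc_dvd _] := bc_prim; rewrite expnM subn1 in bc_dvd.
apply: coprime_dvdl bc_dvd _; apply: coprimeXr.
by rewrite -(coprime_pexpr _ _ b_gt0) coprimePn // expn_gt0 ltnW // Q_gt1.
Qed.

Lemma zeta_conj_inj : injective (fun i : 'I_b => zeta ^+ (Q ^ i)).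
Proof.
(* Q is a unit modulo bc, so two conjugates agree iff bc | Q^(j-i) - 1. *)
move=> i j /eqP; rewrite (eq_prim_root_expr zeta_prim) => eq_ij.
apply: val_inj => /=; move: eq_ij.
wlog le_ij : i j / (i <= j)%N.
  move=> wlog_ij; case: (leqP i j) => [|/ltnW] le; first exact: wlog_ij.
  by rewrite eq_sym => /(wlog_ij _ _ le)/esym.
have Q_gt0 : (0 < Q)%N by rewrite ltnW ?Q_gt1.
rewrite eq_sym eqn_mod_dvd ?leq_pexp2l // -(subnKC le_ij) expnD.
rewrite -[X in (_ - X)%N](muln1 (Q ^ i)%N) -mulnBr Gauss_dvdr ?coprime_bc_Q //.
case def_d : (j - i)%N => [|d]; first by rewrite addn0.
have a_gt0 : (0 < a)%N by move: Q_gt1; case: (a) => //; rewrite expn0.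
have [_ /(_ (a * d.+1)%N)] := bc_prim; rewrite expnM => not_dvd.
rewrite (negbTE (not_dvd _ _)) ?muln_gt0 ?a_gt0 // ltn_pmul2l //.
by have := ltn_ord j; lia.
Qed.

Lemma sum_phi_zeta_eq0 (kap : 'I_b -> A) :
  \sum_(s < b) phi (kap s) * zeta ^+ s = 0 -> forall s, kap s = 0.
Proof.
(* Otherwise the polynomial with coefficients phi (kap s) would have the b
   distinct roots zeta^(Q^j), j < b. *)
move=> sum_eq0; pose kapn i := if insub i is Some s then kap s else 0.
pose P : {poly M} := \poly_(i < b) phi (kapn i).
suff P_eq0 : P = 0.
  move=> s; have /eqP := congr1 (fun q : {poly M} => q`_s) P_eq0.
  by rewrite coef_poly ltn_ord /kapn valK coef0 fmorph_eq0 => /eqP.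
apply/eqP; apply: contraT => P_neq0.
set rs := map (fun i : 'I_b => zeta ^+ (Q ^ i)) (enum 'I_b).
have rs_uniq : uniq rs by rewrite map_inj_uniq ?enum_uniq //; exact: zeta_conj_inj.
have rs_roots : all (root P) rs.
  apply/allP => _ /mapP[j _ ->]; rewrite rootE horner_poly.
  have Qj_gt0 : (0 < Q ^ j)%N by rewrite expn_gt0 ltnW ?Q_gt1.
  apply/eqP; transitivity ((\sum_(s < b) phi (kap s) * zeta ^+ s) ^+ (Q ^ j)); last first.
    by rewrite sum_eq0 expr0n eqn0Ngt Qj_gt0.
  rewrite exprn_sum_pchar ?pnat_pchar_Q //; apply: eq_bigr => i _.
  by rewrite /kapn valK exprMn phi_exprQ exprAC.
by have := max_poly_roots P_neq0 rs_roots rs_uniq; rewrite size_map size_enum_ord ltnNge size_poly.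
Qed.

Lemma phi_zeta_span y :
  exists lam : {ffun 'I_b -> A}, y = \sum_(s < b) phi (lam s) * zeta ^+ s.
Proof.
pose comb (lam : {ffun 'I_b -> A}) := \sum_(s < b) phi (lam s) * zeta ^+ s.
have comb_inj : injective comb.
  move=> lam1 lam2 eq_comb; apply/ffunP => s; apply/eqP; rewrite -subr_eq0; apply/eqP.
  apply: (sum_phi_zeta_eq0 (fun s => lam1 s - lam2 s)).
  rewrite -[RHS](subrr (comb lam1)) {2}eq_comb -sumrB.
  by apply: eq_bigr => i _; rewrite rmorphB mulrBl.
have : y \in codom comb by apply: inj_card_onto; rewrite // card_ffun card_ord cardA cardM.
by case/codomP => lam ->; exists lam.
Qed.

Lemma trace_coords_eq0 beta : (forall s : 'I_b, tau (beta * zeta ^+ s) = 0) -> beta = 0.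
Proof.
move=> coords0; apply/eqP/negPn/negP => beta_neq0.
have [y0 tau_y0] : exists y0, tau y0 = 1.
  have : 1 \in [set tau y | y : M] by rewrite tau_surj inE.
  by case/imsetP => y _ ->; exists y.
have [lam y0E] := phi_zeta_span (beta^-1 * y0).
have : tau y0 = 0.
  rewrite -[y0](mulVKf beta_neq0) y0E mulr_sumr raddf_sum big1 //= => s _.
  by rewrite mulrCA tauZ coords0 mulr0.
by rewrite tau_y0 => /eqP; rewrite oner_eq0.
Qed.

Lemma trace_coords_onto (alpha : 'I_b -> A) :
  exists beta, forall s : 'I_b, tau (beta * zeta ^+ s) = alpha s.
Proof.
pose coords beta : {ffun 'I_b -> A} := [ffun s : 'I_b => tau (beta * zeta ^+ s)].
have coords_inj : injective coords.
  move=> beta1 beta2 /ffunP eq_coords; apply/eqP; rewrite -subr_eq0; apply/eqP.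
  apply: trace_coords_eq0 => s; have := eq_coords s; rewrite !ffunE => eq_s.
  by rewrite mulrBl raddfB /= eq_s subrr.
have : finfun alpha \in codom coords.
  by apply: inj_card_onto; rewrite // card_ffun card_ord cardA cardM.
by case/codomP => beta /ffunP eq_alpha; exists beta => s; have := eq_alpha s; rewrite !ffunE.
Qed.

Local Notation k := ((p ^ (a * b) - 1) %/ (b * c))%N.
Local Notation rhs alpha := ((Psi b Q)%:Q / b%:Q
  * (\sum_(i < b) (nbC p ((Q - 1) %/ c) (alpha i))%:Q)
  - ((p + 1) * Q * Psi b.-1 Q)%N%:Q).

Lemma nbC_trace_coords beta (alpha : 'I_b -> A) :
  (forall s : 'I_b, tau (beta * zeta ^+ s) = alpha s) -> (nbC p k beta)%:Q = rhs alpha.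
Proof.
move=> alphaE; set u := ((Q - 1) %/ c)%N.
have [bc_dvd _] := bc_prim.
have k_def : (k * (b * c))%N = #|M|.-1 by rewrite divnK // cardM -expnM subn1.
have u_def : (u * c)%N = (Q - 1)%N by rewrite divnK.
have Psi_u : (Psi b Q * u = b * k)%N.
  apply/eqP; rewrite -(eqn_pmul2r c_gt0) -mulnA u_def mulnC subn1 -predn_exp.
  by rewrite -cardM -k_def; apply/eqP; ring.
have cardM_k : #|M| = (k * (b * c)).+1 by rewrite k_def prednK // ltnW ?finNzRing_gt1.
have cardA_u : #|A| = (u * c).+1 by rewrite u_def cardA subn1 prednK // ltnW ?Q_gt1.
rewrite (nbC_unity_roots pM _ _ _ cardM_k).
under [in RHS]eq_bigr do rewrite (nbC_unity_roots pA _ _ _ cardA_u).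
rewrite card_as_unity_roots_split; under [in LHS]eq_bigr do rewrite alphaE.
exact: point_count_identity b_gt0 Psi_u.
Qed.

Lemma nbC_trace_correspondence :
  (forall beta : M, exists alpha : 'I_b -> A, (nbC p k beta)%:Q = rhs alpha) /\
  (forall alpha : 'I_b -> A, exists beta : M, (nbC p k beta)%:Q = rhs alpha).
Proof.
split=> [beta | alpha]; first by exists (fun s => tau (beta * zeta ^+ s)); apply: nbC_trace_coords.
by have [beta coordsE] := trace_coords_onto alpha; exists beta; apply: nbC_trace_coords.
Qed.

End TraceCoordinates.

End RelativeTrace.

Theorem corollary6p2 (p a b c : nat)
  (Fm Fa : finFieldType)
  (hp : prime p) (ha : (0 < a)%N) (hb : (1 < b)%N) (hc : (0 < c)%N)
  (hcdvd : (c %| p ^ a - 1)%N)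
  (hcprim : primitive_divisor c p a)
  (hpc : (p - 1 %| c)%N)
  (hn : primitive_divisor (b * c) p (a * b))
  (hFm : #|Fm| = (p ^ (a * b))%N)
  (hFa : #|Fa| = (p ^ a)%N) :
  let m := (a * b)%N in
  let n := (b * c)%N in
  let u := ((p ^ a - 1) %/ c)%N in
  let k := ((p ^ m - 1) %/ n)%N in
  let rhs := fun alpha : 'I_b -> Fa =>
    (Psi b (p ^ a)%N)%:Q / b%:Q * (\sum_(i < b) (nbC p u (alpha i))%:Q)
    - ((p + 1) * p ^ a * Psi b.-1 (p ^ a))%N%:Q in
  (forall beta : Fm, exists alpha : 'I_b -> Fa, (nbC p k beta)%:Q = rhs alpha) /\
  (forall alpha : 'I_b -> Fa, exists beta : Fm, (nbC p k beta)%:Q = rhs alpha).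
Proof.
move=> m n u k rhs.
have pFm : p \in [pchar Fm] := card_finPcharP hFm hp.
have pFa : p \in [pchar Fa] := card_finPcharP hFa hp.
have cardFm : #|Fm| = ((p ^ a) ^ b)%N by rewrite hFm expnM.
have Fa_in_Fm (x : Fa) : x ^+ #|Fm| = x by rewrite cardFm -hFa expf_card_expn.
have [phi [phi_zmod phi_monoid phi_onto]] := finField_embedding pFa pFm Fa_in_Fm.
have [w w_prim] := finField_prim_root_exists Fm.
have [n_dvd _] := hn; rewrite -hFm subn1 in n_dvd.
exact: (nbC_trace_correspondence pFa pFm hFa cardFm (ltnW hb) phi_zmod phi_monoid phi_onto
  hcdvd hn (dvdn_prim_root w_prim n_dvd)).
Qed.
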